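(* Let $k\geq 2$ and $\ell\geq 2$ be integers. Let $G(k,\ell)$ be the graph obtained from the disjoint union of $\ell$ copies $K(1),\dots,K(\ell)$ of $K_{2k}$, where the vertex set of each $K(i)$ is partitioned into two sets $L(i)$ and $R(i)$ of size $k$, by adding, for every $i\in\{1,\dots,\ell\}$ (indices modulo $\ell$), a perfect matching $M(i)$ between $R(i)$ and $L(i+1)$. Let $G'(k,\ell)$ be obtained from $G(k,\ell)$ by adding, for every $i$ (indices modulo $\ell$), a further perfect matching between $R(i)$ and $L(i+1)$ that is edge-disjoint from $M(i)$. Then $G(k,\ell)$ is a connected $2k$-regular graph and $G'(k,\ell)$ is a connected $(2k+1)$-regular graph, and both satisfy $2\alpha=\mathrm{diss}$, i.e. $2\alpha(G(k,\ell))=\mathrm{diss}(G(k,\ell))=2\ell$ and $2\alpha(G'(k,\ell))=\mathrm{diss}(G'(k,\ell))=2\ell$.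
   Context: All graphs are finite, simple and undirected. $\alpha(G)$ is the independence number. A set $D$ of vertices is a dissociation set if the induced subgraph $G[D]$ has maximum degree at most $1$; $\mathrm{diss}(G)$ is the maximum order of a dissociation set. *)

From mathcomp Require Import all_boot all_fingroup.
Set Implicit Arguments. Unset Strict Implicit. Unset Printing Implicit Defensive.

Section GraphNotions.
Variable T : finType.
Variable e : rel T.

Definition simple_graph := irreflexive e /\ symmetric e.

Definition regular (d : nat) := forall v : T, #|[set w | e v w]| = d.

Definition connected_graph := forall u v : T, connect e u v.

Definition independent (S : {set T}) :=
  [forall x in S, forall y in S, ~~ e x y].

Definition dissociation (D : {set T}) :=
  [forall x in D, #|[set y in D | e x y]| <= 1].

Definition alpha := \max_(S : {set T} | independent S) #|S|.
Definition diss := \max_(D : {set T} | dissociation D) #|D|.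
End GraphNotions.

(* Vertices of G(k,l): (i, (s, j)) = j-th vertex of L(i) (s = false)
   or of R(i) (s = true) in the i-th copy K(i) of K_{2k}. *)
Definition gvert (l k : nat) := ('I_l * (bool * 'I_k))%type.

(* Perfect matching between R(i) and L(i+1) (indices mod l) given by
   a bijection sigma i : R(i) -> L(i+1). *)
Definition matchE (l k : nat) (sigma : 'I_l -> {perm 'I_k}) (x y : gvert l k) :=
  [&& x.2.1, ~~ y.2.1, y.1 == ordS x.1 & y.2.2 == sigma x.1 x.2.2].

Definition Gedge (l k : nat) (sigma : 'I_l -> {perm 'I_k}) : rel (gvert l k) :=
  fun x y => [|| (x.1 == y.1) && (x != y), matchE sigma x y | matchE sigma y x].

Definition G'edge (l k : nat) (sigma tau : 'I_l -> {perm 'I_k}) : rel (gvert l k) :=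
  fun x y => [|| Gedge sigma x y, matchE tau x y | matchE tau y x].

From mathcomp Require Import all_boot all_fingroup.
Set Implicit Arguments. Unset Strict Implicit. Unset Printing Implicit Defensive.

(* Each clique K(i) = {i} x (bool * 'I_k) meets an independent set in at most
   one vertex and a dissociation set in at most two, so alpha <= l and
   diss <= 2 l.  Matching edges always join a right vertex to a left one, so
   the left sides induce only edges inside the cliques: one (resp. two) left
   vertices in every clique form an independent (resp. dissociation) set, and
   equality holds.  A vertex is adjacent to the 2k - 1 other vertices of its
   clique and to one partner per matching, and every clique is linked to the
   next one, which gives regularity and connectivity. *)

Lemma card_fiber (I V : finType) (i : I) : #|[set x : I * V | x.1 == i]| = #|V|.
Proof.
have -> : [set x : I * V | x.1 == i] = setX [set i] setT.
  by apply/setP => -[j v]; rewrite !inE andbT.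
by rewrite cardsX cards1 cardsT mul1n.
Qed.

Section CliquePartition.
Variables (I V : finType) (e : rel (I * V)).
Hypothesis e_clique : forall x y : I * V, x.1 == y.1 -> x != y -> e x y.

Lemma independent_card_le (S : {set I * V}) : independent e S -> #|S| <= #|I|.
Proof.
move=> /forallP indS.
have inj_fst : {in S &, injective (@fst I V)}.
  move=> x y xS yS /eqP xy; apply/eqP/negPn/negP => nxy.
  by move/implyP/(_ xS)/forallP/(_ y): (indS x); rewrite yS e_clique.
by rewrite -(card_in_imset inj_fst) max_card.
Qed.

Lemma dissociation_fiber_card (D : {set I * V}) (i : I) :
  dissociation e D -> #|[set x in D | x.1 == i]| <= 2.
Proof.
move=> /forallP dissD; set Di := [set x in D | _].
have [-> | [x xDi]] := set_0Vmem Di; first by rewrite cards0.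
rewrite (cardsD1 x) xDi ltnS; move: xDi; rewrite inE => /andP [xD /eqP xi].
apply: leq_trans (implyP (dissD x) xD); apply: subset_leq_card; apply/subsetP => y.
rewrite !inE => /andP [yx /andP [yD /eqP yi]].
by rewrite yD e_clique // ?xi ?yi // eq_sym.
Qed.

Lemma dissociation_card_le (D : {set I * V}) : dissociation e D -> #|D| <= 2 * #|I|.
Proof.
move=> dissD; rewrite -sum1_card (partition_big (@fst I V) predT) //=.
rewrite mulnC -sum_nat_const; apply: leq_sum => i _.
by rewrite sum1dep_card; apply: dissociation_fiber_card.
Qed.

Lemma in_layer (A : {set V}) (x : I * V) : (x \in setX setT A) = (x.2 \in A).
Proof. by case: x => i v; rewrite in_setX inE. Qed.

Variable P : {set V}.
Hypothesis e_irr : irreflexive e.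
Hypothesis e_P : forall x y : I * V, e x y -> x.2 \in P -> y.2 \in P -> x.1 == y.1.

Lemma layer_nbhd_card (A : {set V}) (x : I * V) : A \subset P -> x.2 \in A ->
  #|[set y in setX setT A | e x y]| <= #|A|.-1.
Proof.
move=> /subsetP AP; case: x => i u /= uA; rewrite (cardsD1 u A) uA /=.
apply: leq_trans (leq_imset_card (pair i) _); apply: subset_leq_card.
apply/subsetP => -[j v]; rewrite !inE /= => /andP [vA euv].
have /eqP /= ij := e_P euv (AP _ uA) (AP _ vA); subst j.
apply/imsetP; exists v => //; rewrite !inE vA andbT.
by apply: contraTneq euv => ->; rewrite e_irr.
Qed.

Lemma independent_layer (A : {set V}) :
  A \subset P -> #|A| <= 1 -> independent e (setX setT A).
Proof.
move=> AP A_le1; apply/forallP => x; apply/implyP => xL; apply/forallP => y.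
apply/implyP => yL; have xA : x.2 \in A by rewrite -in_layer.
have : #|[set y in setX setT A | e x y]| == 0.
  by rewrite -leqn0 (leq_trans (layer_nbhd_card AP xA)) // -subn1 leq_subLR.
by rewrite cards_eq0 => /eqP/setP/(_ y); rewrite in_set0 in_set yL /= => ->.
Qed.

Lemma dissociation_layer (A : {set V}) :
  A \subset P -> #|A| <= 2 -> dissociation e (setX setT A).
Proof.
move=> AP A_le2; apply/forallP => x; apply/implyP => xL.
by rewrite (leq_trans (layer_nbhd_card AP _)) -?in_layer // -subn1 leq_subLR.
Qed.

Lemma alpha_clique_partition : P != set0 -> alpha e = #|I|.
Proof.
case/set0Pn => p pP; apply/eqP; rewrite eqn_leq; apply/andP; split.
  by apply/bigmax_leqP => S; apply: independent_card_le.
have pAP : [set p] \subset P by rewrite sub1set.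
apply: leq_trans (leq_bigmax_cond _ (independent_layer pAP (eq_leq (cards1 p)))).
by rewrite cardsX cardsT cards1 muln1.
Qed.

Lemma diss_clique_partition : 1 < #|P| -> diss e = 2 * #|I|.
Proof.
case/card_gt1P => p [q [pP qP pq]]; apply/eqP; rewrite eqn_leq; apply/andP; split.
  by apply/bigmax_leqP => D; apply: dissociation_card_le.
have pqP : [set p; q] \subset P by rewrite subUset !sub1set pP qP.
have pq_le2 : #|[set p; q]| <= 2 by rewrite cards2 ltnS leq_b1.
apply: leq_trans (leq_bigmax_cond _ (dissociation_layer pqP pq_le2)).
by rewrite cardsX cardsT cards2 pq mulnC.
Qed.

Lemma double_alpha_clique_partition : 1 < #|P| -> 2 * alpha e = diss e.
Proof.
move=> P_gt1; have P_n0 : P != set0 by rewrite -card_gt0 ltnW.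
by rewrite alpha_clique_partition // diss_clique_partition.
Qed.

End CliquePartition.

Lemma iter_ordS_val (l n : nat) (i : 'I_l) : val (iter n (@ordS l) i) = (i + n) %% l.
Proof.
elim: n => [|n IHn] /=; first by rewrite addn0 modn_small.
by rewrite IHn -addn1 modnDml addn1 addnS.
Qed.

Lemma iter_ordS_reach (l : nat) (i j : 'I_l) : iter (l - i + j) (@ordS l) i = j.
Proof.
apply: val_inj; rewrite iter_ordS_val addnA subnKC ?modnDl ?modn_small //.
exact: ltnW.
Qed.

Section CliqueCycle.
Variables (l : nat) (V : finType) (e : rel ('I_l * V)).
Hypothesis e_clique : forall x y : 'I_l * V, x.1 == y.1 -> x != y -> e x y.
Hypothesis e_link : forall i : 'I_l, exists u v, e (i, u) (ordS i, v).

Lemma connect_block (i : 'I_l) (u v : V) : connect e (i, u) (i, v).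
Proof.
have [-> | uv] := eqVneq u v; first exact: connect0.
by apply/connect1/e_clique; rewrite //= xpair_eqE eqxx.
Qed.

Lemma connect_ordS (i : 'I_l) (u v : V) : connect e (i, u) (ordS i, v).
Proof.
have [u' [v' euv']] := e_link i.
apply: connect_trans (connect_block i u u') _.
exact: connect_trans (connect1 euv') (connect_block _ v' v).
Qed.

Lemma clique_cycle_connected : connected_graph e.
Proof.
move=> [i u] [j v]; rewrite -(iter_ordS_reach i j).
elim: (l - i + j) v => [|n IHn] v; first exact: connect_block.
exact: connect_trans (IHn v) (connect_ordS _ v v).
Qed.

End CliqueCycle.

Lemma ordS_neq (l : nat) (i : 'I_l) : 1 < l -> ordS i != i.
Proof.
case: i => i lt_il l_gt1; rewrite -val_eqE /=.
have [lt_Sil | le_lSi] := ltnP i.+1 l; first by rewrite modn_small // gtn_eqF.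
have Sil : i.+1 = l by apply/eqP; rewrite eqn_leq le_lSi lt_il.
by rewrite -Sil modnn eq_sym -lt0n -ltnS Sil.
Qed.

Section GraphFamily.
Variables (k l : nat).
Implicit Types (s t : 'I_l -> {perm 'I_k}) (x y v w : gvert l k).

Definition left_side : {set bool * 'I_k} := [set p | p.1 == false].

Lemma card_left_side : #|left_side| = k.
Proof. by rewrite card_fiber card_ord. Qed.

Lemma matchE_side s x y : matchE s x y -> x.2.1 && ~~ y.2.1.
Proof. by case/and4P => -> ->. Qed.

Lemma Gedge_clique s x y : x.1 == y.1 -> x != y -> Gedge s x y.
Proof. by rewrite /Gedge => -> ->. Qed.

Lemma Gedge_sub s t x y : Gedge s x y -> G'edge s t x y.
Proof. by rewrite /G'edge => ->. Qed.

Lemma G'edge_clique s t x y : x.1 == y.1 -> x != y -> G'edge s t x y.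
Proof. by move=> *; apply/Gedge_sub/Gedge_clique. Qed.

Lemma Gedge_simple s : simple_graph (Gedge s).
Proof.
split; first by case=> i [[] j]; rewrite /Gedge /matchE /= !eqxx.
by move=> x y; rewrite /Gedge eq_sym (eq_sym x) (orbC (matchE s x y)).
Qed.

Lemma G'edge_simple s t : simple_graph (G'edge s t).
Proof.
have [Girr Gsym] := Gedge_simple s.
split; first by case=> i [[] j]; rewrite /G'edge Girr /matchE /= ?andbF.
by move=> x y; rewrite /G'edge Gsym (orbC (matchE t x y)).
Qed.

Lemma Gedge_left s x y :
  Gedge s x y -> x.2 \in left_side -> y.2 \in left_side -> x.1 == y.1.
Proof.
rewrite !inE !eqbF_neg.
by case/or3P => [/andP [] // | /matchE_side/andP [-> _] // | /matchE_side/andP [-> _]].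
Qed.

Lemma G'edge_left s t x y :
  G'edge s t x y -> x.2 \in left_side -> y.2 \in left_side -> x.1 == y.1.
Proof.
case/or3P => [/Gedge_left // | /matchE_side/andP [x_right _] | /matchE_side/andP [y_right _]].
- by rewrite inE x_right.
- by move=> _; rewrite inE y_right.
Qed.

Lemma Gedge_link s : 0 < k -> forall i, exists a b, Gedge s (i, a) (ordS i, b).
Proof.
move=> k_gt0 i; pose j := Ordinal k_gt0.
by exists (true, j), (false, s i j); rewrite /Gedge /matchE /= !eqxx orbT.
Qed.

Lemma G'edge_link s t : 0 < k -> forall i, exists a b, G'edge s t (i, a) (ordS i, b).
Proof.
move=> k_gt0 i; have [a [b ab]] := Gedge_link s k_gt0 i.
by exists a, b; apply: Gedge_sub.
Qed.

Definition partner s v : gvert l k :=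
  if v.2.1 then (ordS v.1, (false, s v.1 v.2.2))
  else (ord_pred v.1, (true, ((s (ord_pred v.1))^-1)%g v.2.2)).

Lemma matchE_partner s v w : matchE s v w || matchE s w v = (w == partner s v).
Proof.
case: v w => i [[] j] [i' [[] j']];
  rewrite /matchE /partner /= !xpair_eqE /= ?andbF ?orbF //.
have -> : (i == ordS i') = (i' == ord_pred i).
  by apply/eqP/eqP => ->; rewrite ?ordSK ?ord_predK.
by case: eqP => [-> | ] //=; apply/eqP/eqP => ->; rewrite ?permK ?permKV.
Qed.

Lemma partner_fst_neq s v : 1 < l -> (partner s v).1 != v.1.
Proof.
move=> l_gt1; rewrite /partner; case: ifP => _ /=; first exact: ordS_neq.
by rewrite -[X in _ != X]ord_predK eq_sym ordS_neq.
Qed.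

Lemma Gedge_nbhd s v :
  [set w | Gedge s v w] = partner s v |: ([set w | w.1 == v.1] :\ v).
Proof.
apply/setP => w; rewrite !inE /Gedge matchE_partner orbC.
by rewrite andbC (eq_sym v) (eq_sym v.1).
Qed.

Lemma Gedge_regular s : 1 < l -> regular (Gedge s) (2 * k).
Proof.
move=> l_gt1 v; rewrite Gedge_nbhd cardsU1 in_setD1 inE.
rewrite (negPf (partner_fst_neq s v l_gt1)) andbF.
have := cardsD1 v [set w | w.1 == v.1]; rewrite inE eqxx card_fiber /= => <-.
by rewrite card_prod card_bool card_ord.
Qed.

Lemma partner_neq s t :
  (forall i j, t i j != s i j) -> forall v, partner t v != partner s v.
Proof.
move=> st_neq [i [[] j]]; rewrite /partner /= !xpair_eqE /= ?eqxx /=.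
  exact: st_neq.
apply: contraNneq (st_neq (ord_pred i) ((s (ord_pred i))^-1%g j)) => ts_eq.
by rewrite [X in _ == X]permKV -ts_eq permKV.
Qed.

Lemma G'edge_nbhd s t v :
  [set w | G'edge s t v w] = partner t v |: [set w | Gedge s v w].
Proof. by apply/setP => w; rewrite !inE /G'edge matchE_partner orbC. Qed.

Lemma G'edge_regular s t : 1 < l -> (forall i j, t i j != s i j) ->
  regular (G'edge s t) (2 * k + 1).
Proof.
move=> l_gt1 st_neq v; rewrite G'edge_nbhd cardsU1 Gedge_regular // Gedge_nbhd.
rewrite in_setU1 (negPf (partner_neq st_neq v)) in_setD1 inE.
by rewrite (negPf (partner_fst_neq t v l_gt1)) andbF addnC.
Qed.

Lemma gvert_alpha_diss (e : rel (gvert l k)) : 1 < k ->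
  (forall x y, x.1 == y.1 -> x != y -> e x y) -> irreflexive e ->
  (forall x y, e x y -> x.2 \in left_side -> y.2 \in left_side -> x.1 == y.1) ->
  2 * alpha e = diss e /\ diss e = 2 * l.
Proof.
move=> k_gt1 e_clique e_irr e_left.
have left_gt1 : 1 < #|left_side| by rewrite card_left_side.
rewrite (@double_alpha_clique_partition 'I_l _ e e_clique _ e_irr e_left) //.
by rewrite (@diss_clique_partition 'I_l _ e e_clique _ e_irr e_left) // card_ord.
Qed.

End GraphFamily.

Theorem mainTheorem8 (k l : nat) (hk : 2 <= k) (hl : 2 <= l)
  (sigma tau : 'I_l -> {perm 'I_k})
  (hdisj : forall (i : 'I_l) (j : 'I_k), tau i j != sigma i j) :
  [/\ simple_graph (Gedge sigma), regular (Gedge sigma) (2 * k),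
      connected_graph (Gedge sigma),
      2 * alpha (Gedge sigma) = diss (Gedge sigma) & diss (Gedge sigma) = 2 * l]
  /\
  [/\ simple_graph (G'edge sigma tau), regular (G'edge sigma tau) (2 * k + 1),
      connected_graph (G'edge sigma tau),
      2 * alpha (G'edge sigma tau) = diss (G'edge sigma tau)
    & diss (G'edge sigma tau) = 2 * l].
Proof.
have k_gt0 : 0 < k := ltnW hk.
have [[G_irr _] [G'_irr _]] := (Gedge_simple sigma, G'edge_simple sigma tau).
have [G_alpha G_diss] :=
  gvert_alpha_diss hk (@Gedge_clique k l sigma) G_irr (@Gedge_left k l sigma).
have [G'_alpha G'_diss] :=
  gvert_alpha_diss hk (@G'edge_clique k l sigma tau) G'_irr (@G'edge_left k l sigma tau).
split; split => //.
- exact: Gedge_simple.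
- exact: Gedge_regular hl.
- exact: clique_cycle_connected (@Gedge_clique k l sigma) (Gedge_link sigma k_gt0).
- exact: G'edge_simple.
- exact: G'edge_regular hl hdisj.
- exact: clique_cycle_connected (@G'edge_clique k l sigma tau) (G'edge_link sigma tau k_gt0).
Qed.
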